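(* Let $\Lambda$ be a left-artinian ring, $\mathcal{C}=\mathrm{mod}(\Lambda)$, let $\mathcal{S}$ be a set of (isoclasses of) simple $\Lambda$-modules, $\mathcal{S}'$ the set of simple $\Lambda$-modules not in $\mathcal{S}$, and let $(\mathcal{T}_{\mathcal{S}},\mathcal{X}_{\mathcal{S}},\mathcal{F}_{\mathcal{S}})$ be the ttf-theory generated by $\mathcal{S}$. Then: (a) $\mathcal{T}_{\mathcal{S}}=\{M\in\mathcal{C}:\mathrm{top}(M)\in\mathrm{add}(\mathcal{S}')\}$; (b) $\mathcal{F}_{\mathcal{S}}=\{M\in\mathcal{C}:\mathrm{soc}(M)\in\mathrm{add}(\mathcal{S}')\}$; (c) if $M\in\mathcal{T}_{\mathcal{S}}$ then the projective cover of $M$ lies in $\mathcal{T}_{\mathcal{S}}$; (d) $I_{\mathcal{S}}:=t_{\mathcal{S}}({}_\Lambda\Lambda)$ is a two-sided ideal of $\Lambda$ and $t_{\mathcal{S}}(M)=I_{\mathcal{S}}M$ for every $M\in\mathcal{C}$.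
   Context: $\mathcal{C}$ is the category of finitely generated left $\Lambda$-modules; $\mathrm{top}(M)=M/\mathrm{rad}(M)$; $\mathrm{add}(\mathcal{S}')$ is the class of finite direct sums of modules in $\mathcal{S}'$. $\mathcal{X}_{\mathcal{S}}$ is the class of $\mathcal{S}$-filtered modules: $M$ with a finite chain $0=M_0\subseteq\cdots\subseteq M_m=M$ of submodules each of whose factors $M_i/M_{i-1}$ is isomorphic to a module in $\mathcal{S}$. The ttf-theory generated by $\mathcal{S}$ is given by $\mathcal{T}_{\mathcal{S}}=\{M:\mathrm{Hom}_\Lambda(M,X)=0\ \forall X\in\mathcal{X}_{\mathcal{S}}\}$ and $\mathcal{F}_{\mathcal{S}}=\{M:\mathrm{Hom}_\Lambda(X,M)=0\ \forall X\in\mathcal{X}_{\mathcal{S}}\}$, so that $(\mathcal{T}_{\mathcal{S}},\mathcal{X}_{\mathcal{S}})$ and $(\mathcal{X}_{\mathcal{S}},\mathcal{F}_{\mathcal{S}})$ are torsion theories. $t_{\mathcal{S}}(M)$ is the trace of $\mathcal{T}_{\mathcal{S}}$ in $M$, i.e. the submodule generated by images of all maps $T\to M$ with $T\in\mathcal{T}_{\mathcal{S}}$. *)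

From HB Require Import structures.
From mathcomp Require Import all_boot all_order all_algebra.
Set Implicit Arguments. Unset Strict Implicit. Unset Printing Implicit Defensive.
Import GRing.Theory.
Local Open Scope ring_scope.

Section ModuleTheory.
Variable R : nzRingType.

Definition submod (M : lmodType R) (U : M -> Prop) : Prop :=
  [/\ U 0, (forall x y, U x -> U y -> U (x + y)) &
      (forall (r : R) x, U x -> U (r *: x))].

Definition fg (M : lmodType R) : Prop :=
  exists s : seq M, forall m : M,
    exists c : 'I_(size s) -> R, m = \sum_(i < size s) c i *: s`_i.

Definition left_artinian : Prop :=
  forall L : nat -> R^o -> Prop,
    (forall n, submod (L n)) ->
    (forall n x, L n.+1 x -> L n x) ->
    exists N, forall n, (N <= n)%N -> forall x, L n x <-> L N x.

Definition simple_mod (M : lmodType R) : Prop :=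
  (exists x : M, x != 0) /\
  forall U : M -> Prop, submod U ->
    (forall x, U x -> x = 0) \/ (forall x, U x).

Definition mod_iso (M N : lmodType R) : Prop :=
  exists f : {linear M -> N}, bijective f.

(* the subquotient A/B (B ⊆ A submodules of M) is isomorphic to X *)
Definition subquot_iso (M : lmodType R) (A B : M -> Prop) (X : lmodType R) :=
  exists f : M -> X,
    [/\ (forall x y, A x -> A y -> f (x + y) = f x + f y),
        (forall (r : R) x, A x -> f (r *: x) = r *: f x),
        (forall z, exists2 x, A x & f x = z) &
        (forall x, A x -> (f x = 0 <-> B x))].

Variable S : lmodType R -> Prop.

Definition filtered (M : lmodType R) : Prop :=
  exists (m : nat) (C : nat -> M -> Prop),
    [/\ (forall i, submod (C i)),
        (forall x, C 0%N x <-> x = 0),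
        (forall x, C m x),
        (forall i x, C i x -> C i.+1 x) &
        (forall i, (i < m)%N ->
           exists2 Y, S Y & subquot_iso (C i.+1) (C i) Y)].

Definition XS (M : lmodType R) : Prop := fg M /\ filtered M.

Definition hom_zero (M N : lmodType R) : Prop :=
  forall (f : {linear M -> N}) (m : M), f m = 0.

(* torsion class T_S and torsion-free class F_S (as conditions on M;
   membership in C = mod(R) additionally requires fg M) *)
Definition TS (M : lmodType R) : Prop :=
  forall X : lmodType R, XS X -> hom_zero M X.
Definition FS (M : lmodType R) : Prop :=
  forall X : lmodType R, XS X -> hom_zero X M.

Definition Scompl (X : lmodType R) : Prop :=
  simple_mod X /\ ~ (exists2 Y, S Y & mod_iso X Y).

End ModuleTheory.

Section Structure.
Variable R : nzRingType.

(* the submodule P of N is isomorphic to a finite direct sum of modules in C *)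
Definition in_add (C : lmodType R -> Prop) (N : lmodType R) (P : N -> Prop) :=
  exists (n : nat) (X : 'I_n -> lmodType R) (iota : forall i, {linear X i -> N}),
    [/\ (forall i, C (X i)),
        (forall i x, P (iota i x)),
        (forall y, P y -> exists x : forall i, X i, y = \sum_(i < n) iota i (x i)) &
        (forall x x' : forall i, X i,
           \sum_(i < n) iota i (x i) = \sum_(i < n) iota i (x' i) ->
           forall i, x i = x' i)].

Definition maximal_submod (M : lmodType R) (U : M -> Prop) : Prop :=
  [/\ submod U, (exists x, ~ U x) &
      forall V : M -> Prop, submod V -> (forall x, U x -> V x) ->
        (forall x, V x <-> U x) \/ (forall x, V x)].

Definition rad (M : lmodType R) (x : M) : Prop :=
  forall U, maximal_submod U -> U x.

Definition simple_submod (M : lmodType R) (U : M -> Prop) : Prop :=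
  [/\ submod U, (exists2 x, U x & x != 0) &
      forall V : M -> Prop, submod V -> (forall x, V x -> U x) ->
        (forall x, V x -> x = 0) \/ (forall x, V x <-> U x)].

Definition soc (M : lmodType R) (y : M) : Prop :=
  exists (n : nat) (U : 'I_n -> M -> Prop) (x : 'I_n -> M),
    [/\ (forall i, simple_submod (U i)), (forall i, U i (x i)) &
        y = \sum_(i < n) x i].

Definition top_in_add (C : lmodType R -> Prop) (M : lmodType R) : Prop :=
  exists (N : lmodType R) (pi : {linear M -> N}),
    [/\ (forall z, exists x, pi x = z),
        (forall x, pi x = 0 <-> rad x) &
        in_add C (fun _ : N => True)].

Definition soc_in_add (C : lmodType R -> Prop) (M : lmodType R) : Prop :=
  in_add C (@soc M).

Definition projective (P : lmodType R) : Prop :=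
  forall (A B : lmodType R), fg A -> fg B ->
  forall g : {linear A -> B}, (forall b, exists a, g a = b) ->
  forall f : {linear P -> B}, exists h : {linear P -> A}, forall p, g (h p) = f p.

(* projective cover pi : P -> M (superfluous kernel) *)
Definition projective_cover (P M : lmodType R) (pi : {linear P -> M}) : Prop :=
  [/\ fg P, projective P, (forall m, exists p, pi p = m) &
      forall U : P -> Prop, submod U ->
        (forall p, exists u k, [/\ U u, pi k = 0 & p = u + k]) ->
        forall p, U p].

Definition trace (S : lmodType R -> Prop) (M : lmodType R) (y : M) : Prop :=
  exists (n : nat) (T : 'I_n -> lmodType R) (f : forall i, {linear T i -> M})
         (t : forall i, T i),
    [/\ (forall i, fg (T i)), (forall i, TS S (T i)) &
        y = \sum_(i < n) f i (t i)].

Definition two_sided_ideal (I : R -> Prop) : Prop :=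
  [/\ I 0, (forall x y, I x -> I y -> I (x + y)),
      (forall a x, I x -> I (a * x)) & (forall a x, I x -> I (x * a))].

Definition ideal_times (I : R -> Prop) (M : lmodType R) (y : M) : Prop :=
  exists (n : nat) (r : 'I_n -> R) (m : 'I_n -> M),
    (forall i, I (r i)) /\ y = \sum_(i < n) r i *: m i.

End Structure.

Definition IS (R : nzRingType) (S : lmodType R -> Prop) : R -> Prop :=
  fun r : R => @trace R S R^o r.

(* Because [S] consists of simple modules, [M] lies in [T_S] (resp. [F_S]) iff
   no nonzero map goes from [M] to (resp. to [M] from) a module of [S]: an
   [S]-filtration can be cut at its first step receiving (resp. not killed by)
   a given map.
   (a) Over an artinian ring, the radical of a finitely generated [M] is an
   irredundant finite intersection of maximal submodules [U_j], so by the
   Chinese remainder theorem [top M] is the direct sum of the simple [M/U_j];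
   these avoid [S] exactly when [M] is in [T_S].
   (b) Dually, the socle is a finite direct sum of simple submodules [R u_i]:
   an infinite independent family would give a strictly descending chain.
   (c) A map from the projective cover to a module of [S] that does not factor
   through [M] is nonzero on the superfluous kernel, hence everywhere zero.
   (d) A finitely generated [T] in [T_S] satisfies [T = I_S T]; otherwise a
   maximal [K] containing [I_S T] and a minimal left ideal [I] with [I s] not
   in [K] yield a generator [u] of [I] that lies in [I_S] but has [u s]
   outside [K]. *)

From Pilot Require Import Defs.
From HB Require Import structures.
From mathcomp Require Import all_boot all_order all_algebra.
From mathcomp Require classical_sets.
From Stdlib Require Import ClassicalEpsilon Classical FunctionalExtensionality PropExtensionality.
Set Implicit Arguments. Unset Strict Implicit. Unset Printing Implicit Defensive.
Import GRing.Theory.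
Local Open Scope ring_scope.

Section LinearOfAdditive.
Variables (R : nzRingType) (A B : lmodType R) (f : A -> B).
Hypothesis fD : forall x y, f (x + y) = f x + f y.
Hypothesis fZ : forall (r : R) x, f (r *: x) = r *: f x.

Lemma linear_of_additive : linear f.
Proof. by move=> a u v; rewrite fD fZ. Qed.

Definition mkLin : {linear A -> B} :=
  HB.pack f (GRing.isLinear.Build R A B *:%R f linear_of_additive).

Lemma mkLinE x : mkLin x = f x. Proof. by []. Qed.
End LinearOfAdditive.

Section Submodules.
Variables (R : nzRingType) (M : lmodType R).
Implicit Types (U V : M -> Prop).

Lemma submod0 U : submod U -> U 0. Proof. by case. Qed.

Lemma submodD U : submod U -> forall x y, U x -> U y -> U (x + y).
Proof. by case. Qed.

Lemma submodZ U : submod U -> forall r x, U x -> U (r *: x).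
Proof. by case. Qed.

Lemma submodN U : submod U -> forall x, U x -> U (- x).
Proof. by move=> hU x hx; rewrite -scaleN1r; apply: submodZ. Qed.

Lemma submodB U : submod U -> forall x y, U x -> U y -> U (x - y).
Proof. by move=> hU x y hx hy; apply: (submodD hU hx (submodN hU hy)). Qed.

Lemma submod_sum U (I : Type) (r : seq I) (P : pred I) (F : I -> M) :
  submod U -> (forall i, P i -> U (F i)) -> U (\sum_(i <- r | P i) F i).
Proof. by move=> hU hF; apply: (big_ind U) => //; [exact: submod0 | exact: submodD]. Qed.

Lemma submodI U V : submod U -> submod V -> submod (fun x => U x /\ V x).
Proof.
move=> hU hV; split; first by split; [exact: (submod0 hU) | exact: (submod0 hV)].
- move=> x y [Ux Vx] [Uy Vy].
  by split; [exact: (submodD hU Ux Uy) | exact: (submodD hV Vx Vy)].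
- by move=> r x [Ux Vx]; split; [exact: (submodZ hU r Ux) | exact: (submodZ hV r Vx)].
Qed.

Lemma submod_add U V : submod U -> submod V ->
  submod (fun x => exists u v, [/\ U u, V v & x = u + v]).
Proof.
move=> hU hV; split.
- by exists 0, 0; split; [exact: (submod0 hU) | exact: (submod0 hV) | rewrite addr0].
- move=> _ _ [u [v [hu hv ->]]] [u' [v' [hu' hv' ->]]].
  exists (u + u'), (v + v'); split; last exact: addrACA.
    exact: (submodD hU hu hu').
  exact: (submodD hV hv hv').
- move=> r _ [u [v [hu hv ->]]].
  exists (r *: u), (r *: v); split; last exact: scalerDr.
    exact: (submodZ hU r hu).
  exact: (submodZ hV r hv).
Qed.

Lemma submod_bigI (I : Type) (U : I -> M -> Prop) :
  (forall i, submod (U i)) -> submod (fun x => forall i, U i x).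
Proof.
move=> hU; split=> [i|x y hx hy i|r x hx i]; first exact: submod0.
- exact: (submodD (hU i) (hx i) (hy i)).
- exact: (submodZ (hU i) r (hx i)).
Qed.

Lemma submod_ext U V : (forall x, U x <-> V x) -> submod U -> submod V.
Proof.
move=> eUV hU; split; first by apply/eUV; apply: submod0 hU.
- by move=> x y /eUV hx /eUV hy; apply/eUV; apply: (submodD hU hx hy).
- by move=> r x /eUV hx; apply/eUV; apply: (submodZ hU r hx).
Qed.

Lemma submod_full : submod (fun _ : M => True).
Proof. by []. Qed.

Lemma submod_zero : submod (fun x : M => x = 0).
Proof. by split => [|x y -> ->|r x ->]; rewrite ?addr0 ?scaler0. Qed.

Lemma submod_cyclic (y : M) : submod (fun x => exists r : R, x = r *: y).
Proof.
split; first by exists 0; rewrite scale0r.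
- by move=> _ _ [a ->] [b ->]; exists (a + b); rewrite scalerDl.
- by move=> r _ [a ->]; exists (r * a); rewrite scalerA.
Qed.
End Submodules.

Lemma submod_ker (R : nzRingType) (A B : lmodType R) (f : {linear A -> B}) :
  submod (fun x => f x = 0).
Proof.
split; first exact: linear0.
- by move=> x y hx hy; rewrite linearD hx hy addr0.
- by move=> r x hx; rewrite linearZ_LR hx scaler0.
Qed.

Lemma submod_image (R : nzRingType) (A B : lmodType R) (f : {linear A -> B}) :
  submod (fun y => exists x, y = f x).
Proof.
split; first by exists 0; rewrite linear0.
- by move=> _ _ [a ->] [b ->]; exists (a + b); rewrite linearD.
- by move=> r _ [a ->]; exists (r *: a); rewrite linearZ_LR.
Qed.

Lemma submod_preim (R : nzRingType) (A B : lmodType R) (f : {linear A -> B})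
    (V : B -> Prop) :
  submod V -> submod (fun x => V (f x)).
Proof.
move=> hV; split; first by rewrite linear0; apply: submod0.
- by move=> x y hx hy; rewrite linearD; apply: submodD.
- by move=> r x hx; rewrite linearZ_LR; apply: submodZ.
Qed.

(* The quotient M/U, with a canonical representative chosen in each coset. *)
Section Quotient.
Variables (R : nzRingType) (M : lmodType R) (U : M -> Prop) (HU : submod U).

Definition qrep (x : M) : M := epsilon (inhabits 0) (fun z => U (x - z)).

Lemma qrepP x : U (x - qrep x).
Proof.
apply: (epsilon_spec (inhabits (0 : M)) (fun z => U (x - z))).
by exists x; rewrite subrr; apply: submod0.
Qed.

Lemma qrep_eq x y : U (x - y) -> qrep x = qrep y.
Proof.
move=> h; rewrite /qrep; congr epsilon; apply: functional_extensionality => z.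
apply: propositional_extensionality; split => hz.
- by have := submodD HU (submodN HU h) hz; rewrite opprB addrA subrK.
- by have := submodD HU h hz; rewrite addrA subrK.
Qed.

Lemma qrep_id x : qrep (qrep x) = qrep x.
Proof. by apply: qrep_eq; have := submodN HU (qrepP x); rewrite opprB. Qed.

Definition quot_of of submod U := {x : M | qrep x == x}.
Local Notation quot := (quot_of HU).
HB.instance Definition _ := Choice.on quot.

Definition qpi (x : M) : quot := exist _ (qrep x) (introT eqP (qrep_id x)).

Lemma qpi_val (q : quot) : qpi (val q) = q.
Proof. by case: q => x hx; apply: val_inj => /=; apply/eqP. Qed.

Lemma qpi_eqP x y : qpi x = qpi y <-> U (x - y).
Proof.
split=> [/(congr1 val) /= e|h]; last by apply: val_inj; apply: qrep_eq.
have := submodD HU (qrepP x) (submodN HU (qrepP y)).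
by rewrite e opprB addrA subrK.
Qed.

Lemma qpi_ind (P : quot -> Prop) : (forall x, P (qpi x)) -> forall q, P q.
Proof. by move=> h q; rewrite -(qpi_val q). Qed.

Lemma qpi_valB x : U (val (qpi x) - x).
Proof. by have := submodN HU (qrepP x); rewrite opprB. Qed.

Definition qadd (a b : quot) := qpi (val a + val b).
Definition qopp (a : quot) := qpi (- val a).
Definition qscale (r : R) (a : quot) := qpi (r *: val a).
Definition qzero := qpi 0.

Lemma qaddE x y : qadd (qpi x) (qpi y) = qpi (x + y).
Proof.
by apply/qpi_eqP; have := submodD HU (qpi_valB x) (qpi_valB y); rewrite addrACA opprD.
Qed.

Lemma qoppE x : qopp (qpi x) = qpi (- x).
Proof. by apply/qpi_eqP; have := submodN HU (qpi_valB x); rewrite opprB opprK addrC. Qed.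

Lemma qscaleE r x : qscale r (qpi x) = qpi (r *: x).
Proof. by apply/qpi_eqP; have := submodZ HU r (qpi_valB x); rewrite scalerBr. Qed.

Lemma qaddA : associative qadd.
Proof. by do 3!elim/qpi_ind=> ?; rewrite !qaddE addrA. Qed.
Lemma qaddC : commutative qadd.
Proof. by do 2!elim/qpi_ind=> ?; rewrite !qaddE addrC. Qed.
Lemma qadd0 : left_id qzero qadd.
Proof. by elim/qpi_ind=> x; rewrite /qzero qaddE add0r. Qed.
Lemma qaddN : left_inverse qzero qopp qadd.
Proof. by elim/qpi_ind=> x; rewrite qoppE qaddE addNr. Qed.
HB.instance Definition _ := GRing.isZmodule.Build quot qaddA qaddC qadd0 qaddN.

Lemma qscaleA a b v : qscale a (qscale b v) = qscale (a * b) v.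
Proof. by elim/qpi_ind: v => x; rewrite !qscaleE scalerA. Qed.
Lemma qscale1 : left_id 1 qscale.
Proof. by elim/qpi_ind=> x; rewrite qscaleE scale1r. Qed.
Lemma qscaleDr : right_distributive qscale qadd.
Proof. by move=> a; do 2!elim/qpi_ind=> ?; rewrite qaddE !qscaleE qaddE scalerDr. Qed.
Lemma qscaleDl v : {morph qscale^~ v : a b / a + b}.
Proof. by elim/qpi_ind: v => x a b; rewrite !qscaleE scalerDl -qaddE. Qed.
HB.instance Definition _ :=
  GRing.Zmodule_isLmodule.Build R quot qscaleA qscale1 qscaleDr qscaleDl.

Lemma qpiD x y : qpi (x + y) = qpi x + qpi y. Proof. by rewrite -qaddE. Qed.
Lemma qpiZ r x : qpi (r *: x) = r *: qpi x. Proof. by rewrite -qscaleE. Qed.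

Definition qpiL : {linear M -> quot} := mkLin qpiD qpiZ.
Lemma qpiLE x : qpiL x = qpi x. Proof. by []. Qed.

Lemma qpiB x y : qpi (x - y) = qpi x - qpi y. Proof. exact: (linearB qpiL). Qed.

Lemma qpi_eq0 x : qpi x = 0 <-> U x.
Proof. by rewrite -[0]/qzero qpi_eqP subr0. Qed.
End Quotient.

Arguments quot_of {R M U} HU.

Lemma ex_min_nat (P : nat -> Prop) :
  (exists n, P n) -> exists n, P n /\ forall k, (k < n)%N -> ~ P k.
Proof.
move=> [n Pn]; elim: n {-2}n (leqnn n) Pn => [|N IH] n.
  by rewrite leqn0 => /eqP -> P0; exists 0%N.
move=> le_nN Pn; case: (classic (exists k, (k < n)%N /\ P k)) => [[k [lt_kn Pk]]|].
  by apply: (IH k) => //; rewrite -ltnS (leq_trans lt_kn).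
by move=> hmin; exists n; split=> // k lt_kn Pk; apply: hmin; exists k.
Qed.

Lemma sum_nonzero (R : nzRingType) (M : lmodType R) n (F : 'I_n -> M) :
  \sum_(i < n) F i != 0 -> exists i, F i != 0.
Proof.
move=> h; apply: NNPP => hno; move/negP: h; apply; apply/eqP; apply: big1 => i _.
by apply/eqP; apply: NNPP => hi; apply: hno; exists i; apply/negP.
Qed.

Section Homomorphisms.
Variable R : nzRingType.

Lemma hom_factor (A B Y : lmodType R) (f : {linear A -> B}) (U : B -> Prop)
    (g : {linear A -> Y}) :
  submod U -> (forall b, exists a, U (b - f a)) -> (forall a, U (f a) -> g a = 0) ->
  exists h : {linear B -> Y}, forall a, h (f a) = g a.
Proof.
move=> HU cover gU.
pose pre b := epsilon (inhabits (0 : A)) (fun a => U (b - f a)).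
have preP b : U (b - f (pre b)).
  exact: (epsilon_spec (inhabits (0 : A)) (fun a => U (b - f a))).
have wd b a a' : U (b - f a) -> U (b - f a') -> g a = g a'.
  move=> ha ha'; apply/eqP; rewrite -subr_eq0 -linearB; apply/eqP/gU.
  suff -> : f (a - a') = (b - f a') - (b - f a) by exact: (submodB HU ha' ha).
  by rewrite linearB [RHS]addrC opprB addrA subrK.
have hD x y : g (pre (x + y)) = g (pre x) + g (pre y).
  rewrite -linearD; apply: (wd (x + y)) => //.
  by have := submodD HU (preP x) (preP y); rewrite linearD opprD addrACA.
have hZ r x : g (pre (r *: x)) = r *: g (pre x).
  rewrite -linearZ_LR; apply: (wd (r *: x)) => //.
  by have := submodZ HU r (preP x); rewrite linearZ_LR scalerBr.
exists (mkLin hD hZ) => a; apply: (wd (f a)) => //.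
by rewrite subrr; apply: submod0.
Qed.

Lemma hom_factor_surj (A B Y : lmodType R) (f : {linear A -> B}) (g : {linear A -> Y}) :
  (forall b, exists a, f a = b) -> (forall a, f a = 0 -> g a = 0) ->
  exists h : {linear B -> Y}, forall a, h (f a) = g a.
Proof.
move=> fsurj fg0; apply: (hom_factor (submod_zero B)) => // b.
by have [a <-] := fsurj b; exists a; rewrite subrr.
Qed.

Lemma mod_iso_sym (A B : lmodType R) : mod_iso A B -> mod_iso B A.
Proof.
move=> [f [g fK gK]].
have gD x y : g (x + y) = g x + g y.
  by apply: (can_inj fK); rewrite linearD !gK.
have gZ (r : R) x : g (r *: x) = r *: g x.
  by apply: (can_inj fK); rewrite linearZ !gK.
by exists (mkLin gD gZ); exists f.
Qed.
End Homomorphisms.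

Section SimpleModules.
Variable R : nzRingType.

Lemma simple_cyclic (Y : lmodType R) (y : Y) :
  simple_mod Y -> y != 0 -> forall z : Y, exists r : R, z = r *: y.
Proof.
move=> [_ hs] y0 z; case: (hs _ (submod_cyclic y)) => [h|]; last exact.
by case/eqP: y0; apply: h; exists 1; rewrite scale1r.
Qed.

Lemma simple_fg (Y : lmodType R) : simple_mod Y -> fg Y.
Proof.
move=> hY; have [y y0] := hY.1; exists [:: y] => z.
by have [r ->] := simple_cyclic hY y0 z; exists (fun _ => r); rewrite big_ord1.
Qed.

Lemma simple_hom_iso (A B : lmodType R) (f : {linear A -> B}) :
  simple_mod A -> simple_mod B -> (exists a, f a != 0) -> mod_iso A B.
Proof.
move=> hA hB [a fa0].
have f_inj : injective f.
  move=> x y e; apply/eqP; rewrite -subr_eq0; apply/eqP.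
  case: (hA.2 _ (submod_ker f)) => [|/(_ a) fa]; first by apply; rewrite linearB e subrr.
  by rewrite fa eqxx in fa0.
have f_surj b : exists x, f x = b.
  by have [r ->] := simple_cyclic hB fa0 b; exists (r *: a); rewrite linearZ.
pose g b := epsilon (inhabits (0 : A)) (fun x => f x = b).
have gK : cancel g f.
  by move=> b; apply: (epsilon_spec (inhabits (0 : A)) (fun x => f x = b)).
by exists f, g => // x; apply: f_inj; rewrite gK.
Qed.

Lemma ker_maximal (M Y : lmodType R) (h : {linear M -> Y}) :
  simple_mod Y -> (exists m, h m != 0) -> maximal_submod (fun x => h x = 0).
Proof.
move=> hY [m hm0]; split; first exact: submod_ker.
  by exists m => hm; rewrite hm eqxx in hm0.
move=> V hV kerV; case: (classic (exists v, V v /\ h v != 0)) => [[v [Vv hv0]]|hno].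
  right=> x; have [r hr] := simple_cyclic hY hv0 (h x).
  have -> : x = (x - r *: v) + r *: v by rewrite subrK.
  apply: (submodD hV); last exact: submodZ.
  by apply: kerV; rewrite linearB linearZ_LR -hr subrr.
left=> x; split; last exact: kerV.
by move=> Vx; apply/eqP; apply: NNPP => hx0; apply: hno; exists x; split=> //; apply/negP.
Qed.

Lemma simple_submod_image (Y M : lmodType R) (g : {linear Y -> M}) :
  simple_mod Y -> (exists y, g y != 0) -> simple_submod (fun x => exists y, x = g y).
Proof.
move=> hY [y0 gy0]; split; first exact: submod_image.
  by exists (g y0) => //; exists y0.
move=> W hW Wim; case: (hY.2 _ (submod_preim g hW)) => h; [left|right] => x.
  by move=> Wx; have [y ex] := Wim x Wx; rewrite ex in Wx *; rewrite (h y Wx) linear0.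
by split; [exact: Wim | move=> [y ->]; apply: h].
Qed.
Lemma simple_submod_ext (M : lmodType R) (U V : M -> Prop) :
  (forall x, U x <-> V x) -> simple_submod U -> simple_submod V.
Proof.
move=> eUV [hU [x Ux x0] Umin]; split; first exact: submod_ext eUV hU.
  by exists x => //; apply/eUV.
move=> W hW WV; have [W0|eWU] := Umin W hW (fun x Wx => proj2 (eUV x) (WV x Wx)); first by left.
by right=> y; rewrite eWU.
Qed.
End SimpleModules.

Section Filtrations.
Variables (R : nzRingType) (S : lmodType R -> Prop).

Lemma simple_XS (Y : lmodType R) : S Y -> simple_mod Y -> XS S Y.
Proof.
move=> SY hY; split; first exact: simple_fg.
exists 1%N, (fun i (x : Y) => if i is 0%N then x = 0 else True); split => //.
- by case=> [|i]; [exact: submod_zero | exact: submod_full].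
- by case=> // _; exists Y => //; exists id; split => // z; exists z.
Qed.

Lemma filtered_hom_to (A X : lmodType R) (f : {linear A -> X}) :
  filtered S X -> (exists a, f a != 0) ->
  exists2 Y, S Y & exists (h : {linear A -> Y}) a, h a != 0.
Proof.
move=> [m [C [subC C0 Cm Cinc Cfac]]] [a0 fa0].
have [j [Cj jmin]] := ex_min_nat (ex_intro (fun j => forall a, C j (f a)) m (fun a => Cm _)).
case: j Cj jmin => [|i] Cj jmin.
  by move: fa0; have /C0 -> := Cj a0; rewrite eqxx.
have lt_im : (i < m)%N.
  by rewrite ltnNge; apply/negP => le_mi; apply: (jmin m _ (fun a => Cm _)); rewrite ltnS.
have [a1 Ca1] : exists a, ~ C i (f a).
  by apply: NNPP => h; apply: (jmin i (ltnSn i)) => a; apply: NNPP => ?; apply: h; exists a.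
have [Y SY [phi [phD phZ _ phK]]] := Cfac i lt_im.
have hD x y : phi (f (x + y)) = phi (f x) + phi (f y) by rewrite linearD phD.
have hZ (r : R) x : phi (f (r *: x)) = r *: phi (f x) by rewrite linearZ_LR phZ.
exists Y => //; exists (mkLin hD hZ), a1; rewrite mkLinE.
by apply/negP => /eqP /(phK _ (Cj a1)).
Qed.

Lemma filtered_hom_from (B X : lmodType R) (f : {linear X -> B}) :
  filtered S X -> (exists a, f a != 0) ->
  exists2 Y, S Y & exists (g : {linear Y -> B}) y, g y != 0.
Proof.
move=> [m [C [subC C0 Cm Cinc Cfac]]] [a0 fa0].
have [j [[a [Cja fa]] jmin]] := ex_min_nat
  (ex_intro (fun j => exists a, C j a /\ f a != 0) m (ex_intro _ a0 (conj (Cm a0) fa0))).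
case: j Cja jmin => [|i] Cja jmin.
  by move: fa; have /C0 -> := Cja; rewrite linear0 eqxx.
have lt_im : (i < m)%N.
  rewrite ltnNge; apply/negP => le_mi.
  by apply: (jmin m _ (ex_intro _ a0 (conj (Cm a0) fa0))); rewrite ltnS.
have f0 x : C i x -> f x = 0.
  move=> Cx; apply/eqP; apply: NNPP => fx0; apply: (jmin i (ltnSn i)).
  by exists x; split=> //; apply/negP.
have [Y SY [phi [phD phZ phS phK]]] := Cfac i lt_im.
have wd x x' : C i.+1 x -> C i.+1 x' -> phi x = phi x' -> f x = f x'.
  move=> Cx Cx' e; apply/eqP; rewrite -subr_eq0 -linearB; apply/eqP/f0.
  have Cxx' := submodB (subC _) Cx Cx'.
  apply/(phK _ Cxx'); have := phD _ _ Cx' Cxx'; rewrite addrC subrK => h.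
  by apply: (addrI (phi x')); rewrite addr0 -h e.
pose pre y := epsilon (inhabits (0 : X)) (fun x => C i.+1 x /\ phi x = y).
have [preC preE] : (forall y, C i.+1 (pre y)) /\ (forall y, phi (pre y) = y).
  apply: all_and2 => y.
  apply: (epsilon_spec (inhabits (0 : X)) (fun x => C i.+1 x /\ phi x = y)).
  by have [x Cx <-] := phS y; exists x.
have gD y y' : f (pre (y + y')) = f (pre y) + f (pre y').
  rewrite -linearD; apply: wd => //; first exact: submodD.
  by rewrite phD // !preE.
have gZ (r : R) y : f (pre (r *: y)) = r *: f (pre y).
  rewrite -linearZ_LR; apply: wd => //; first exact: submodZ.
  by rewrite phZ // !preE.
exists Y => //; exists (mkLin gD gZ), (phi a); rewrite mkLinE.
by rewrite (@wd (pre (phi a)) a (preC _) Cja (preE _)).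
Qed.

Hypothesis Ssimple : forall X, S X -> simple_mod X.

Lemma TS_simpleP (M : lmodType R) :
  TS S M <-> forall Y, S Y -> forall (h : {linear M -> Y}) m, h m = 0.
Proof.
split=> [hT Y SY | hT X [_ fX] f m]; first exact: hT (simple_XS SY (Ssimple SY)).
apply/eqP; apply: NNPP => /negP fm0.
have [Y SY [h [a ha0]]] := filtered_hom_to fX (ex_intro _ m fm0).
by move/negP: ha0; apply; apply/eqP; apply: hT.
Qed.

Lemma FS_simpleP (M : lmodType R) :
  FS S M <-> forall Y, S Y -> forall (h : {linear Y -> M}) m, h m = 0.
Proof.
split=> [hT Y SY | hT X [_ fX] f m]; first exact: hT (simple_XS SY (Ssimple SY)).
apply/eqP; apply: NNPP => /negP fm0.
have [Y SY [h [a ha0]]] := filtered_hom_from fX (ex_intro _ m fm0).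
by move/negP: ha0; apply; apply/eqP; apply: hT.
Qed.

End Filtrations.

Section Span.
Variables (R : nzRingType) (M : lmodType R).

Fixpoint span (s : seq M) (x : M) : Prop :=
  if s is a :: s' then exists (r : R) y, span s' y /\ x = r *: a + y else x = 0.

Lemma submod_span s : submod (span s).
Proof.
elim: s => [|a s IH] /=; first exact: submod_zero.
split; first by exists 0, 0; split; [exact: (submod0 IH) | rewrite scale0r addr0].
- move=> _ _ [r [x [hx ->]]] [r' [y [hy ->]]]; exists (r + r'), (x + y).
  by split; [exact: (submodD IH hx hy) | rewrite scalerDl addrACA].
- move=> c _ [r [x [hx ->]]]; exists (c * r), (c *: x).
  by split; [exact: (submodZ IH _ hx) | rewrite scalerDr scalerA].
Qed.

Lemma span_sum s (c : nat -> R) : span s (\sum_(i < size s) c i *: s`_i).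
Proof.
elim: s c => [|a s IH] c /=; first by rewrite big_ord0.
rewrite big_ord_recl; exists (c 0%N), (\sum_(i < size s) c i.+1 *: s`_i).
by split; first exact: (IH (fun i => c i.+1)).
Qed.

Lemma fg_span : fg M -> exists s : seq M, forall m, span s m.
Proof.
move=> [s hs]; exists s => m; have [c ->] := hs m.
pose c' i := if insub i is Some j then c j else 0.
suff -> : \sum_(i < size s) c i *: s`_i = \sum_(i < size s) c' i *: s`_i by apply: span_sum.
by apply: eq_bigr => i _; rewrite /c' valK.
Qed.
End Span.

Section ArtinianModules.
Variable R : nzRingType.

Definition dcc (M : lmodType R) : Prop :=
  forall L : nat -> M -> Prop,
    (forall n, submod (L n)) -> (forall n x, L n.+1 x -> L n x) ->
    exists N, forall n, (N <= n)%N -> forall x, L n x <-> L N x.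

Lemma chain_antimono (M : lmodType R) (L : nat -> M -> Prop) :
  (forall n x, L n.+1 x -> L n x) -> forall m n, (m <= n)%N -> forall x, L n x -> L m x.
Proof.
move=> decL m n /subnK <-; elim: (n - m)%N => [|k IH] x //.
by rewrite addSn => /decL; apply: IH.
Qed.

Hypothesis Rart : left_artinian R.

(* Induction on a generating sequence [a :: s]: a descending chain stabilizes
   once both its trace on [span s] and its left ideals of [a]-coefficients do. *)
Lemma dcc_span (M : lmodType R) (s : seq M) (L : nat -> M -> Prop) :
  (forall n, submod (L n)) -> (forall n x, L n.+1 x -> L n x) ->
  (forall n x, L n x -> span s x) ->
  exists N, forall n, (N <= n)%N -> forall x, L n x <-> L N x.
Proof.
elim: s L => [|a s IH] L subL decL inL.
  exists 0%N => n _ x; split; first exact: chain_antimono decL _ _ (leq0n n) x.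
  by move=> Lx; rewrite (inL 0%N x Lx); apply: (submod0 (subL n)).
have spanS := submod_span s.
pose B n x := L n x /\ span s x.
have [N1 stabB] : exists N, forall n, (N <= n)%N -> forall x, B n x <-> B N x.
  apply: IH => [n||n x []] //; first exact: submodI.
  by move=> n x [Lx sx]; split=> //; apply: decL.
pose I n (r : R^o) := exists y, span s y /\ L n (r *: a + y).
have [N2 stabI] : exists N, forall n, (N <= n)%N -> forall r, I n r <-> I N r.
  apply: Rart => [n|n r [y [sy Ly]]]; last by exists y; split=> //; apply: decL.
  split; first by exists 0; rewrite scale0r add0r; split; apply: submod0.
  - move=> r r' [y [sy Ly]] [y' [sy' Ly']]; exists (y + y').
    split; first exact: (submodD spanS sy sy').
    by rewrite scalerDl addrACA; apply: (submodD (subL n) Ly Ly').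
  - move=> c r [y [sy Ly]]; exists (c *: y); split; first exact: (submodZ spanS _ sy).
    by have := submodZ (subL n) c Ly; rewrite scalerDr scalerA.
exists (maxn N1 N2) => n le_Nn x; split; first exact: chain_antimono.
move=> Lx; have [r [y [sy ex]]] := inL _ _ Lx.
have [y' [sy' Ly']] : I n r.
  apply/(stabI n (leq_trans (leq_maxr _ _) le_Nn))/(stabI _ (leq_maxr N1 N2)).
  by exists y; split=> //; rewrite -ex.
have -> : x = (r *: a + y') + (y - y') by rewrite ex -addrA [y' + _]addrC subrK.
have By : B (maxn N1 N2) (y - y').
  split; last exact: (submodB spanS sy sy').
  have := submodB (subL _) Lx (chain_antimono decL le_Nn Ly').
  by rewrite ex opprD addrACA subrr add0r addrC.
apply: (submodD (subL n) Ly' _).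
have /(stabB _ (leq_maxl N1 N2)) BN1 := By.
by case: ((stabB n (leq_trans (leq_maxl _ _) le_Nn) (y - y')).2 BN1).
Qed.

Lemma dcc_fg (M : lmodType R) : fg M -> dcc M.
Proof. by move=> /fg_span [s hs] L subL decL; apply: (dcc_span subL decL) => n x _. Qed.
End ArtinianModules.

Lemma dcc_minimal (R : nzRingType) (M : lmodType R) (P : (M -> Prop) -> Prop) :
  dcc M -> (forall V, P V -> submod V) -> (exists V, P V) ->
  exists V, P V /\ forall W, P W -> (forall x, W x -> V x) -> forall x, V x -> W x.
Proof.
move=> hdcc subP [V0 PV0]; apply: NNPP => nomin.
pose smaller V W := P V -> [/\ P W, forall x, W x -> V x & exists x, V x /\ ~ W x].
have step V : exists W, smaller V W.
  case: (classic (P V)) => PV; last by exists V.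
  apply: NNPP => noW; apply: nomin; exists V; split=> // W PW WV x Vx.
  by apply: NNPP => Wx; apply: noW; exists W => _; split=> //; exists x.
pose next V := epsilon (inhabits V) (smaller V).
have nextP V : smaller V (next V) := epsilon_spec (inhabits V) (smaller V) (step V).
pose L n := iter n next V0.
have PL n : P (L n) by elim: n => [|n IH] //=; case: (nextP _ IH).
have [N stab] := hdcc L (fun n => subP _ (PL n)) (fun n => let: And3 _ h _ := nextP _ (PL n) in h).
have [_ _ [x [Lx nLx]]] := nextP _ (PL N).
by apply: nLx; apply/(stab N.+1 (leqnSn N)).
Qed.

Section MaximalSubmodules.
Variables (R : nzRingType) (M : lmodType R).

Lemma maximal_avoiding (V : M -> Prop) (a : M) :
  submod V -> ~ V a ->
  exists K : M -> Prop, [/\ submod K, (forall x, V x -> K x), ~ K a &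
    forall W, submod W -> (forall x, K x -> W x) -> ~ W a -> forall x, W x -> K x].
Proof.
move=> subV nVa.
(* The empty predicate is admitted so that the empty chain has an upper bound. *)
pose P (W : M -> Prop) := (forall x, ~ W x) \/ [/\ submod W, (forall x, V x -> W x) & ~ W a].
have [A [PA Amax]] : exists A, P A /\ forall B, classical_sets.proper A B -> ~ P B.
  apply: classical_sets.Zorn_bigcup => F FP Ftot.
  case: (classic (exists X, F X /\ exists x, X x)) => [[X0 [FX0 ne0]]|hno]; last first.
    by left => x [X FX Xx]; apply: hno; exists X; split=> //; exists x.
  have goodX X : F X -> (exists x, X x) -> [/\ submod X, (forall x, V x -> X x) & ~ X a].
    by move=> FX [x Xx]; case: (FP X FX) => // h; case: (h x Xx).
  have [sX0 VX0 _] := goodX X0 FX0 ne0.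
  right; split.
  - split; first by exists X0 => //; apply: (submod0 sX0).
    + move=> x y [X FX Xx] [Y FY Yy].
      have [sX _ _] := goodX X FX (ex_intro _ x Xx).
      have [sY _ _] := goodX Y FY (ex_intro _ y Yy).
      case: (Ftot X Y FX FY) => XY; first by exists Y => //; apply: (submodD sY (XY x Xx) Yy).
      by exists X => //; apply: (submodD sX Xx (XY y Yy)).
    + move=> r x [X FX Xx]; exists X => //.
      by have [sX _ _] := goodX X FX (ex_intro _ x Xx); apply: submodZ.
  - by move=> x Vx; exists X0 => //; apply: VX0.
  - by move=> [X FX Xa]; case: (goodX X FX (ex_intro _ a Xa)).
case: PA => [A0|[sA VA nAa]].
  exfalso; apply: (Amax V); last by right.
  by split=> [x /A0 //|VA]; apply: (A0 0); apply: VA; apply: (submod0 subV).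
exists A; split=> // W sW AW nWa x Wx; apply: NNPP => nAx.
apply: (Amax W); last by right; split=> // y /VA /AW.
by split=> // AW'; apply: nAx; apply: AW'.
Qed.

(* Induction on generators: either [V + R a] is still proper, or [a] is the
   element to avoid, and a submodule maximal among those avoiding [a] is maximal. *)
Lemma fg_exists_maximal (V : M -> Prop) : fg M -> submod V -> (exists x, ~ V x) ->
  exists K, maximal_submod K /\ forall x, V x -> K x.
Proof.
move=> /fg_span [s hs] sV.
have : forall m, exists v y, [/\ V v, span s y & m = v + y].
  by move=> m; exists 0, m; split; rewrite ?add0r //; apply: (submod0 sV).
elim: s {hs} V sV => [|a s IH] V sV cover [x0 nVx0].
  by exfalso; apply: nVx0; have [v [y [Vv /= -> ->]]] := cover x0; rewrite addr0.
pose V2 x := exists v (r : R), V v /\ x = v + r *: a.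
have sV2 : submod V2.
  split; first by exists 0, 0; split; [exact: (submod0 sV) | rewrite scale0r addr0].
  - move=> _ _ [v [r [Vv ->]]] [v' [r' [Vv' ->]]]; exists (v + v'), (r + r').
    by split; [exact: (submodD sV Vv Vv') | rewrite scalerDl addrACA].
  - move=> c _ [v [r [Vv ->]]]; exists (c *: v), (c * r).
    by split; [exact: (submodZ sV _ Vv) | rewrite scalerDr scalerA].
have VV2 x : V x -> V2 x by move=> Vx; exists x, 0; rewrite scale0r addr0.
case: (classic (exists x, ~ V2 x)) => [nV2|V2all].
  have [|K [maxK V2K]] := IH V2 sV2 _ nV2; last by exists K; split=> // x /VV2 /V2K.
  move=> m; have [v [_ [Vv [r [y [sy ->]]] ->]]] := cover m.
  by exists (v + r *: a), y; split; rewrite ?addrA //; exists v, r.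
have {}V2all x : V2 x by apply: NNPP => nV2x; apply: V2all; exists x.
have nVa : ~ V a.
  move=> Va; apply: nVx0; have [v [r [Vv ->]]] := V2all x0.
  exact: (submodD sV Vv (submodZ sV _ Va)).
have [K [sK VK nKa Kmax]] := maximal_avoiding sV nVa.
exists K; split=> //; split=> //; first by exists a.
move=> W sW KW; case: (classic (W a)) => Wa; [right|left] => x.
  have [v [r [Vv ->]]] := V2all x.
  exact: (submodD sW (KW _ (VK _ Vv)) (submodZ sW _ Wa)).
by split; [exact: Kmax | exact: KW].
Qed.
End MaximalSubmodules.

Section TorsionClass.
Variables (R : nzRingType) (S : lmodType R -> Prop).
Hypothesis Ssimple : forall X, S X -> simple_mod X.

Lemma TS_quot (M : lmodType R) (U : M -> Prop) (HU : submod U) :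
  TS S M -> TS S (quot_of HU).
Proof.
move=> TSM X XSX f; elim/qpi_ind => x.
by rewrite -qpiLE -[f _]/((f \o qpiL HU) x); apply: TSM.
Qed.

Lemma simple_TS_Scompl (X : lmodType R) : simple_mod X -> TS S X -> Scompl S X.
Proof.
move=> hX TSX; split=> // [[Y SY [f [g fK _]]]].
have [x /eqP] := hX.1; apply; apply: (can_inj fK).
by rewrite (TSX Y (simple_XS SY (Ssimple SY)) f x) linear0.
Qed.

Lemma top_in_add_TS (M : lmodType R) : top_in_add (Scompl S) M -> TS S M.
Proof.
move=> [N [pi [pi_surj pi_ker [n [X [iota [SX _ iota_onto _]]]]]]].
apply/(TS_simpleP Ssimple) => Y SY h m; apply/eqP; apply: NNPP => /negP hm0.
have [h' hh'] : exists h' : {linear N -> Y}, forall p, h' (pi p) = h p.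
  apply: (hom_factor_surj pi_surj) => k /pi_ker radk.
  exact: radk _ (ker_maximal (Ssimple SY) (ex_intro _ m hm0)).
have [x ex] := iota_onto (pi m) I.
have : \sum_(i < n) (h' \o iota i) (x i) != 0 by rewrite -linear_sum -ex hh'.
move=> /sum_nonzero [i hi]; apply: (SX i).2; exists Y => //.
by apply: (@simple_hom_iso _ _ _ (h' \o iota i) (SX i).1 (Ssimple SY)); exists (x i).
Qed.

(* A map [h] from [P] to a module of [S] that does not factor through [pi] is
   nonzero at some [k] of [ker pi]; as the target is simple,
   [ker h + R k = P], so [ker h = P] because [ker pi] is superfluous. *)
Lemma projective_cover_TS (M P : lmodType R) (pi : {linear P -> M}) :
  TS S M -> projective_cover pi -> TS S P.
Proof.
move=> TSM [_ _ pi_surj superfluous]; apply/(TS_simpleP Ssimple) => Y SY h m.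
apply/eqP; apply: NNPP => /negP hm0.
have [k [pik0 hk0]] : exists k, pi k = 0 /\ h k != 0.
  apply: NNPP => hno.
  have [|h' hh'] := hom_factor_surj pi_surj (g := h).
    move=> k pik0; apply/eqP; apply: NNPP => /negP hk0; apply: hno; exists k.
    by split=> //; apply/negP.
  by move/negP: hm0; apply; rewrite -hh' (proj1 (TS_simpleP Ssimple M) TSM Y SY h').
have h0 : forall p, h p = 0.
  apply: (superfluous _ (submod_ker h)) => p.
  have [r hr] := simple_cyclic (Ssimple SY) hk0 (h p).
  exists (p - r *: k), (r *: k); split; last by rewrite subrK.
    by rewrite linearB linearZ_LR -hr subrr.
  by rewrite linearZ_LR pik0 scaler0.
by rewrite h0 eqxx in hm0.
Qed.
End TorsionClass.

Section MaximalQuotients.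
Variables (R : nzRingType) (M : lmodType R).

Lemma maximal_submod_submod (U : M -> Prop) : maximal_submod U -> submod U.
Proof. by case. Qed.

Lemma submod_rad : submod (@Defs.rad R M).
Proof. by apply: submod_bigI => U; apply: submod_bigI => /maximal_submod_submod. Qed.

Lemma quot_maximal_simple (U : M -> Prop) (HU : submod U) :
  maximal_submod U -> simple_mod (quot_of HU).
Proof.
move=> [_ [x nUx] Umax]; split; first by exists (qpi HU x); apply/negP => /eqP /qpi_eq0.
move=> V hV; have hV' := submod_preim (qpiL HU) hV.
have UV' y : U y -> V (qpiL HU y).
  by move=> /(qpi_eq0 HU) Uy; rewrite qpiLE Uy; apply: submod0 hV.
case: (Umax _ hV' UV') => eV; [left|right]; elim/qpi_ind => y; rewrite -qpiLE.
  by move=> /eV /(qpi_eq0 HU).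
exact: eV.
Qed.

Lemma maximal_cover (U W : M -> Prop) :
  maximal_submod U -> submod W -> (exists w, W w /\ ~ U w) ->
  forall m, exists w, W w /\ U (m - w).
Proof.
move=> [hU _ Umax] hW [w0 [Ww0 nUw0]] m.
have UV x : U x -> exists u w, [/\ U u, W w & x = u + w].
  by move=> Ux; exists x, 0; split; rewrite ?addr0 //; apply: submod0 hW.
case: (Umax _ (submod_add hU hW) UV) => [eV|/(_ m) [u [w [Uu Ww ->]]]].
  exfalso; apply: nUw0; apply/eV; exists 0, w0.
  by split; rewrite ?add0r //; apply: submod0 hU.
by exists w; rewrite addrK.
Qed.
End MaximalQuotients.

Section Radical.
Variable R : nzRingType.
Hypothesis Rart : left_artinian R.

Lemma rad_finite_meet (M : lmodType R) : fg M ->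
  exists k (U : 'I_k -> M -> Prop),
    (forall j, maximal_submod (U j)) /\ forall x, (forall j, U j x) -> Defs.rad x.
Proof.
move=> fgM.
pose P V := exists k (U : 'I_k -> M -> Prop),
  (forall j, maximal_submod (U j)) /\ forall x, V x <-> forall j, U j x.
have subP V : P V -> submod V.
  move=> [k [U [maxU eV]]]; apply: submod_ext (fun x => iff_sym (eV x)) _.
  by apply: submod_bigI => j; apply: maximal_submod_submod.
have PT : P (fun _ => True) by exists 0%N, (fun _ _ => True); split=> [[]|] //.
have [V [[k [U [maxU eV]]] Vmin]] := dcc_minimal (dcc_fg Rart fgM) subP (ex_intro _ _ PT).
exists k, U; split=> // x /eV Vx W maxW.
pose UW (i : 'I_k.+1) := if unlift ord_max i is Some j then U j else W.
have PVW : P (fun y => V y /\ W y).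
  exists k.+1, UW; split=> [i|y]; first by rewrite /UW; case: unliftP.
  split=> [[/eV Uy Wy] i|UWy]; first by rewrite /UW; case: unliftP.
  split; last by have := UWy ord_max; rewrite /UW unlift_none.
  by apply/eV => j; have := UWy (lift ord_max j); rewrite /UW liftK.
by have [] := Vmin _ PVW (fun y h => h.1) x Vx.
Qed.

(* A shortest such family is irredundant: dropping [U j] would still cut out [rad]. *)
Lemma rad_irredundant_meet (M : lmodType R) : fg M ->
  exists k (U : 'I_k -> M -> Prop), [/\ forall j, maximal_submod (U j),
    forall x, Defs.rad x <-> (forall j, U j x) &
    forall j, exists x, (forall i, i != j -> U i x) /\ ~ U j x].
Proof.
move=> fgM; have [k [[U [maxU Urad]] kmin]] := ex_min_nat (rad_finite_meet fgM).
exists k, U; split=> // [x|j]; first by split=> [radx j|/Urad //]; apply: radx.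
apply: NNPP => noj; apply: (kmin k.-1).
  by rewrite ltn_predL (leq_ltn_trans (leq0n j) (ltn_ord j)).
exists (fun i => U (lift j i)); split=> // x Ux; apply: Urad => i.
case: (unliftP j i) => [i' ->|->] //; apply: NNPP => nUjx; apply: noj; exists x.
by split=> // i0; rewrite eq_sym => /unlift_some [i1 -> _].
Qed.
End Radical.

(* Chinese remainder theorem: if [U j + meet_(i != j) U i = M] for every [j],
   then [M / meet_j U j] is the direct sum of the [M / U j]. *)
Section ChineseRemainder.
Variables (R : nzRingType) (M : lmodType R) (k : nat) (U : 'I_k -> M -> Prop).
Hypothesis hU : forall j, submod (U j).
Variables (D : M -> Prop) (HD : submod D).
Hypothesis D_meet : forall x, D x <-> forall j, U j x.

Definition others (j : 'I_k) x := forall i, i != j -> U i x.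

Lemma submod_others j : submod (others j).
Proof. by apply: submod_bigI => i; apply: submod_bigI => _; apply: hU. Qed.

Hypothesis cover : forall j m, exists w, others j w /\ U j (m - w).

Definition crt_sel (j : 'I_k) m := epsilon (inhabits 0) (fun w => others j w /\ U j (m - w)).

Lemma crt_selP j m : others j (crt_sel j m) /\ U j (m - crt_sel j m).
Proof. exact: (epsilon_spec (inhabits 0) (fun w => others j w /\ U j (m - w)) (cover j m)). Qed.

Lemma crt_sel_eq j x y : others j y -> U j (x - y) -> qpi HD (crt_sel j x) = qpi HD y.
Proof.
move=> oy Uxy; have [osel Usel] := crt_selP j x.
apply/qpi_eqP/D_meet => i; case: (eqVneq i j) => [->|ij]; last first.
  exact: (submodB (hU i) (osel i ij) (oy i ij)).
by have := submodB (hU j) Uxy Usel; rewrite opprB addrC addrA subrK.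
Qed.

Lemma crt_sel_sum j (t : 'I_k -> M) :
  U j (\sum_i crt_sel i (t i) - crt_sel j (t j)).
Proof.
rewrite (bigD1 j) //= addrAC subrr add0r; apply: (submod_sum _ (hU j)) => i ij.
by apply: (crt_selP i (t i)).1; rewrite eq_sym.
Qed.

Definition crt_inj (j : 'I_k) (q : quot_of (hU j)) := qpi HD (crt_sel j (val q)).
Arguments crt_inj : clear implicits.

Lemma crt_inj_qpi j x : crt_inj j (qpi (hU j) x) = qpi HD (crt_sel j x).
Proof.
apply: crt_sel_eq; first exact: (crt_selP j x).1.
by have := submodD (hU j) (qpi_valB (hU j) x) (crt_selP j x).2; rewrite addrA subrK.
Qed.

Lemma crt_injD j q q' : crt_inj j (q + q') = crt_inj j q + crt_inj j q'.
Proof.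
elim/qpi_ind: q => x; elim/qpi_ind: q' => y; rewrite -qpiD !crt_inj_qpi -qpiD.
apply: crt_sel_eq; first exact: (submodD (submod_others j) (crt_selP j x).1 (crt_selP j y).1).
by have := submodD (hU j) (crt_selP j x).2 (crt_selP j y).2; rewrite opprD addrACA.
Qed.

Lemma crt_injZ j r q : crt_inj j (r *: q) = r *: crt_inj j q.
Proof.
elim/qpi_ind: q => x; rewrite -qpiZ !crt_inj_qpi -qpiZ.
apply: crt_sel_eq; first exact: (submodZ (submod_others j) r (crt_selP j x).1).
by have := submodZ (hU j) r (crt_selP j x).2; rewrite scalerBr.
Qed.

Definition crt_injL (j : 'I_k) : {linear quot_of (hU j) -> quot_of HD} :=
  mkLin (@crt_injD j) (@crt_injZ j).

Lemma crt_in_add (C : lmodType R -> Prop) :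
  (forall j, C (quot_of (hU j))) -> in_add C (fun _ : quot_of HD => True).
Proof.
move=> CU; exists k, (fun j => quot_of (hU j)), crt_injL; split=> //.
- elim/qpi_ind=> m _; exists (fun j => qpi (hU j) m).
  under eq_bigr do rewrite mkLinE crt_inj_qpi -qpiLE.
  rewrite -linear_sum /=; apply/qpi_eqP/D_meet => j.
  have := submodB (hU j) (crt_selP j m).2 (crt_sel_sum j (fun=> m)).
  by rewrite opprB addrA subrK.
- move=> x x' e i; pose z j := x j - x' j.
  have Dsum : D (\sum_j crt_sel j (val (z j))).
    have zsum : \sum_j crt_injL j (z j) = 0.
      by rewrite /z; under eq_bigr do rewrite linearB; rewrite sumrB e subrr.
    by apply/(qpi_eq0 HD); rewrite -{}zsum -qpiLE linear_sum; apply: eq_bigr.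
  have := submodB (hU i) (proj1 (D_meet _) Dsum i) (crt_sel_sum i (fun j => val (z j))).
  rewrite opprB addrC subrK => Usel.
  have := submodD (hU i) (crt_selP i (val (z i))).2 Usel; rewrite subrK.
  by rewrite -(qpi_eq0 (hU i)) qpi_val => /eqP; rewrite subr_eq0 => /eqP.
Qed.
End ChineseRemainder.

Lemma TS_top_in_add (R : nzRingType) (S : lmodType R -> Prop) (M : lmodType R) :
  left_artinian R -> (forall X, S X -> simple_mod X) ->
  fg M -> TS S M -> top_in_add (Scompl S) M.
Proof.
move=> Rart Ssimple fgM TSM.
have [k [U [maxU radE irred]]] := rad_irredundant_meet Rart fgM.
have hU j := maximal_submod_submod (maxU j).
exists (quot_of (submod_rad M)), (qpiL (submod_rad M)); split.
- by elim/qpi_ind=> x; exists x.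
- by move=> x; rewrite qpiLE qpi_eq0.
apply: (crt_in_add (hU := hU)) => // [j m|j].
  exact: maximal_cover (maxU j) (submod_others hU j) (irred j) m.
apply: (simple_TS_Scompl Ssimple); first exact: quot_maximal_simple.
exact: TS_quot.
Qed.

Section Families.
Variables (R : nzRingType) (M : lmodType R).
Implicit Types (Us : nat -> M -> Prop) (n : nat).

Definition fam_span Us n (y : M) :=
  exists z : nat -> M, (forall i, (i < n)%N -> Us i (z i)) /\ y = \sum_(i < n) z i.

Definition fam_indep Us n :=
  forall z : nat -> M, (forall i, (i < n)%N -> Us i (z i)) -> \sum_(i < n) z i = 0 ->
    forall i, (i < n)%N -> z i = 0.

Definition fam_simple Us n := forall i, (i < n)%N -> simple_submod (Us i).

Lemma sum_pad n N (z : nat -> M) : (n <= N)%N ->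
  \sum_(i < N) (if (i < n)%N then z i else 0) = \sum_(i < n) z i.
Proof. by move=> le_nN; rewrite [RHS](big_ord_widen N z le_nN) [RHS]big_mkcond. Qed.

Lemma submod_fam_span Us n :
  (forall i, (i < n)%N -> submod (Us i)) -> submod (fam_span Us n).
Proof.
move=> hU; split.
- by exists (fun _ => 0); split=> [i /hU /submod0 //|]; rewrite big1.
- move=> _ _ [x [Ux ->]] [y [Uy ->]]; exists (fun i => x i + y i); rewrite big_split.
  by split=> // i lt_in; apply: (submodD (hU i lt_in) (Ux i lt_in) (Uy i lt_in)).
- move=> r _ [x [Ux ->]]; exists (fun i => r *: x i); rewrite scaler_sumr.
  by split=> // i lt_in; apply: (submodZ (hU i lt_in) r (Ux i lt_in)).
Qed.

Lemma fam_eq_on Us Vs n : (forall i, (i < n)%N -> Us i = Vs i) ->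
  [/\ forall y, fam_span Us n y <-> fam_span Vs n y,
      fam_indep Us n <-> fam_indep Vs n & fam_simple Us n <-> fam_simple Vs n].
Proof.
move=> eUV; split.
- by move=> y; split=> [[z [Uz ->]]|[z [Vz ->]]]; exists z; split=> // i lt_in;
    [rewrite -eUV // ; apply: Uz | rewrite eUV //; apply: Vz].
- by split=> indep z hz; apply: indep => i lt_in; [rewrite eUV | rewrite -eUV] => //; apply: hz.
- by split=> hs i lt_in; [rewrite -eUV | rewrite eUV] => //; apply: hs.
Qed.

Lemma simple_submod_meet (V W : M -> Prop) : simple_submod V -> submod W ->
  (exists2 x, V x & ~ W x) -> forall x, V x -> W x -> x = 0.
Proof.
move=> [hV _ Vmin] hW [x0 Vx0 nWx0].
case: (Vmin _ (submodI hV hW) (fun x h => h.1)) => [VW0 x Vx Wx|VW]; first exact: VW0.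
by exfalso; apply: nWx0; have [] := (VW x0).2 Vx0.
Qed.

Lemma fam_indep_step Us n :
  (forall i, (i <= n)%N -> submod (Us i)) -> simple_submod (Us n) ->
  (exists2 x, Us n x & ~ fam_span Us n x) -> fam_indep Us n -> fam_indep Us n.+1.
Proof.
move=> hU simpleUn [x0 Ux0 nx0] indep z Uz; rewrite big_ord_recr /= => sum0.
have span_ltn : submod (fam_span Us n).
  by apply: submod_fam_span => i /ltnW; apply: hU.
have zn0 : z n = 0.
  apply: (simple_submod_meet simpleUn span_ltn (ex_intro2 _ _ x0 Ux0 nx0) (Uz n (ltnSn n))).
  exists (fun i => - z i); split.
    by move=> i lt_in; apply: (submodN (hU i (ltnW lt_in))); apply: Uz; apply: ltnW.
  by rewrite sumrN; apply/eqP; rewrite -addr_eq0 addrC sum0.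
rewrite zn0 addr0 in sum0.
move=> i; rewrite ltnS leq_eqVlt => /orP [/eqP -> //|lt_in].
by apply: indep => // j lt_jn; apply: Uz; apply: ltnW.
Qed.
End Families.

Section InfiniteIndependent.
Variables (R : nzRingType) (M : lmodType R) (Us : nat -> M -> Prop).
Hypothesis Us_simple : forall i, simple_submod (Us i).
Hypothesis Us_indep : forall n, fam_indep Us n.

Let hUs i : submod (Us i). Proof. by case: (Us_simple i). Qed.

Definition fam_tail n (y : M) := exists N (z : nat -> M),
  (forall i, (i < N)%N -> ((n <= i)%N -> Us i (z i)) /\ ((i < n)%N -> z i = 0)) /\
  y = \sum_(i < N) z i.

Lemma submod_fam_tail n : submod (fam_tail n).
Proof.
split; first by exists 0%N, (fun _ => 0); rewrite big_ord0.
- move=> _ _ [N1 [z1 [h1 ->]]] [N2 [z2 [h2 ->]]].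
  pose pad N (z : nat -> M) i := if (i < N)%N then z i else 0.
  have padP N z :
      (forall i, (i < N)%N -> ((n <= i)%N -> Us i (z i)) /\ ((i < n)%N -> z i = 0)) ->
      forall i, ((n <= i)%N -> Us i (pad N z i)) /\ ((i < n)%N -> pad N z i = 0).
    move=> hz i; rewrite /pad; case: ifP => [/hz //|_].
    by split=> // _; apply: submod0 (hUs i).
  exists (N1 + N2)%N, (fun i => pad N1 z1 i + pad N2 z2 i).
  rewrite big_split /= !sum_pad ?leq_addr ?leq_addl //; split=> // i _.
  have [U1 z1_0] := padP _ _ h1 i; have [U2 z2_0] := padP _ _ h2 i.
  split=> [le_ni|lt_in]; first exact: (submodD (hUs i) (U1 le_ni) (U2 le_ni)).
  by rewrite z1_0 // z2_0 // addr0.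
- move=> r _ [N [z [hz ->]]]; exists N, (fun i => r *: z i); rewrite scaler_sumr.
  split=> // i /hz [Uz z0]; split=> [/Uz|/z0 ->]; last exact: scaler0.
  exact: (submodZ (hUs i) r).
Qed.

Lemma fam_tail_decr n y : fam_tail n.+1 y -> fam_tail n y.
Proof.
move=> [N [z [hz ->]]]; exists N, z; split=> // i /hz [Uz z0].
split; last by move=> /ltnW /z0.
rewrite leq_eqVlt => /orP [/eqP eq_ni|]; last exact: Uz.
by rewrite z0 ?eq_ni //; apply: submod0 (hUs i).
Qed.

Lemma infinite_independent_not_dcc : ~ dcc M.
Proof.
move=> /(_ _ submod_fam_tail fam_tail_decr) [N0 stab].
have [_ [y0 Uy0 y0_neq0] _] := Us_simple N0.
have tail_y0 : fam_tail N0.+1 y0.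
  apply/(stab _ (leqnSn N0)); exists N0.+1, (fun i => if i == N0 then y0 else 0).
  rewrite big_ord_recr /= eqxx big1 ?add0r => [|i _]; last by rewrite ifN // neq_ltn ltn_ord.
  split=> // i lt_iN; split; last by move=> lt_iN0; rewrite ifN // neq_ltn lt_iN0.
  by move=> le_N0i; rewrite (_ : i = N0) ?eqxx //; apply/eqP; rewrite eqn_leq le_N0i andbT.
have [N [z [hz ez]]] := tail_y0.
case: (leqP N N0) => [le_NN0|lt_N0N].
  move/eqP: y0_neq0; apply; rewrite ez big1 // => i _; apply: (hz i (ltn_ord i)).2.
  by rewrite ltnS (leq_trans _ le_NN0) // ltnW.
pose w i := z i - (if i == N0 then y0 else 0).
have Uw i : (i < N)%N -> Us i (w i).
  move=> lt_iN; rewrite /w; case: (eqVneq i N0) => [->|neq_iN0].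
    by rewrite (hz N0 lt_N0N).2 // sub0r; apply: (submodN (hUs N0) Uy0).
  rewrite subr0; case: (ltnP i N0.+1) => [lt_iN0|]; last exact: (hz i lt_iN).1.
  by rewrite (hz i lt_iN).2 //; apply: submod0 (hUs i).
have sum_w : \sum_(i < N) w i = 0.
  rewrite /w sumrB -ez (bigD1 (Ordinal lt_N0N)) //= eqxx big1 ?addr0 ?subrr // => i.
  by rewrite -val_eqE /= => /negPf ->.
have := Us_indep Uw sum_w lt_N0N; rewrite /w eqxx (hz N0 lt_N0N).2 // sub0r.
by move/eqP; rewrite oppr_eq0 (negPf y0_neq0).
Qed.
End InfiniteIndependent.

Section Socle.
Variable R : nzRingType.
Hypothesis Rart : left_artinian R.

(* A greedy choice of new simple submodules would produce an infinite
   independent sequence. *)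
Lemma socle_finite (M : lmodType R) : fg M ->
  exists n (Us : nat -> M -> Prop), [/\ fam_simple Us n, fam_indep Us n &
    forall V, simple_submod V -> forall x, V x -> fam_span Us n x].
Proof.
move=> fgM; apply: NNPP => nomax.
pose valid (F : nat -> M -> Prop) n := fam_simple F n /\ fam_indep F n.
pose grows (F : nat -> M -> Prop) n (V : M -> Prop) :=
  valid F n -> simple_submod V /\ exists2 x, V x & ~ fam_span F n x.
have ext_ex F n : exists V, grows F n V.
  apply: NNPP => noV; apply: nomax; exists n, F.
  case: (classic (valid F n)) => [[sF iF]|nvalid]; last first.
    by exfalso; apply: noV; exists (fun _ => False) => /nvalid.
  split=> // V sV x Vx; apply: NNPP => nx; apply: noV; exists V => _.
  by split=> //; exists x.
pose dflt (_ : M) := False.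
pose ext F n := epsilon (inhabits dflt) (grows F n).
have extP F n : grows F n (ext F n) := epsilon_spec (inhabits dflt) (grows F n) (ext_ex F n).
pose pre := fix pre n :=
  if n is n'.+1 then fun i => if i == n' then ext (pre n') n' else pre n' i else fun _ => dflt.
have pre_stable m i : (i < m)%N -> pre m i = pre i.+1 i.
  elim: m => // m IH; rewrite ltnS leq_eqVlt => /orP [/eqP ->|lt_im] /=; first by rewrite eqxx.
  by rewrite ifN ?IH // neq_ltn lt_im.
pose Us i := pre i.+1 i.
have eq_pre n := fam_eq_on (fun i lt_in => pre_stable n i lt_in).
have valid_Us n : valid Us n.
  elim: n => [|n [sU iU]]; first by split=> [i|z _ _ i].
  have [espan eindep esimple] := eq_pre n.
  have [sV [x Vx nx]] := extP (pre n) n (conj (proj2 esimple sU) (proj2 eindep iU)).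
  have UsE : Us n = ext (pre n) n by rewrite /Us /= eqxx.
  split=> [i|]; first by rewrite ltnS leq_eqVlt => /orP [/eqP ->|/sU]; rewrite ?UsE.
  apply: fam_indep_step; rewrite ?UsE //; last by exists x => // /espan.
  move=> i; rewrite leq_eqVlt => /orP [/eqP ->|/sU [] //]; rewrite UsE; by case: sV.
apply: (infinite_independent_not_dcc (Us := Us)) (dcc_fg Rart fgM) => [i|n].
  exact: (valid_Us i.+1).1 i (ltnSn i).
exact: (valid_Us n).2.
Qed.
End Socle.

Section FirstIsomorphism.
Variables (R : nzRingType) (A B : lmodType R) (f : {linear A -> B}).

Definition coim_map (q : quot_of (submod_ker f)) := f (val q).

Lemma coim_map_qpi x : coim_map (qpi (submod_ker f) x) = f x.
Proof. by apply/eqP; rewrite -subr_eq0 -linearB; apply/eqP/(qpi_valB (submod_ker f)). Qed.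

Lemma coim_mapD q q' : coim_map (q + q') = coim_map q + coim_map q'.
Proof. by elim/qpi_ind: q => x; elim/qpi_ind: q' => y; rewrite -qpiD !coim_map_qpi linearD. Qed.

Lemma coim_mapZ r q : coim_map (r *: q) = r *: coim_map q.
Proof. by elim/qpi_ind: q => x; rewrite -qpiZ !coim_map_qpi linearZ_LR. Qed.

Definition coimL : {linear quot_of (submod_ker f) -> B} := mkLin coim_mapD coim_mapZ.

Lemma coimL_qpi x : coimL (qpi (submod_ker f) x) = f x. Proof. exact: coim_map_qpi. Qed.

Lemma coimL_eq0 q : coimL q = 0 -> q = 0.
Proof. by elim/qpi_ind: q => x; rewrite coimL_qpi => /(qpi_eq0 (submod_ker f)). Qed.
End FirstIsomorphism.

Section Cyclic.
Variable R : nzRingType.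

Lemma fg_quot_regular (U : R^o -> Prop) (HU : submod U) : fg (quot_of HU).
Proof.
exists [:: qpi HU 1]; elim/qpi_ind => r; exists (fun _ => r).
by rewrite big_ord1 /= -qpiZ; congr qpi; rewrite [_ *: _]mulr1.
Qed.

Definition scale_map (M : lmodType R) (m : M) : {linear R^o -> M} :=
  mkLin (fun r r' : R^o => scalerDl m r r')
        (fun (c : R) (r : R^o) => esym (scalerA c r m)).

Lemma scale_mapE (M : lmodType R) (m : M) (r : R^o) : scale_map m r = r *: m.
Proof. by []. Qed.

Lemma simple_submod_cyclic (M : lmodType R) (V : M -> Prop) (u : M) :
  simple_submod V -> V u -> u != 0 -> forall x, V x <-> exists r : R, x = r *: u.
Proof.
move=> [hV _ Vmin] Vu u_neq0.
have RuV x : (exists r : R, x = r *: u) -> V x by move=> [r ->]; apply: (submodZ hV).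
case: (Vmin _ (submod_cyclic u) RuV) => [Ru0|eRu x]; last exact: iff_sym (eRu x).
by exfalso; move/eqP: u_neq0; apply; apply: Ru0; exists 1; rewrite scale1r.
Qed.

Lemma inj_image_simple (X M : lmodType R) (g : {linear X -> M}) :
  (forall x, g x = 0 -> x = 0) -> simple_submod (fun y => exists x, y = g x) -> simple_mod X.
Proof.
move=> g_inj [_ [_ [x0 ->] gx0_neq0] Imin]; split.
  by exists x0; apply: contraNneq gx0_neq0 => ->; rewrite linear0.
move=> W hW; pose gW y := exists2 x, W x & y = g x.
have hgW : submod gW.
  split; first by exists 0; [apply: submod0 hW | rewrite linear0].
  - by move=> _ _ [x Wx ->] [y Wy ->]; exists (x + y); [apply: (submodD hW) | rewrite linearD].
  - by move=> r _ [x Wx ->]; exists (r *: x); [apply: (submodZ hW) | rewrite linearZ_LR].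
have g_injective : injective g.
  by move=> a b e; apply/eqP; rewrite -subr_eq0; apply/eqP/g_inj; rewrite linearB e subrr.
have gWI y : gW y -> exists x, y = g x by move=> [x _ ->]; exists x.
case: (Imin _ hgW gWI) => [gW0|egW]; [left|right] => x.
  by move=> Wx; apply: g_inj; apply: gW0; exists x.
by have [x' Wx' /g_injective ->] := (egW (g x)).2 (ex_intro _ x erefl).
Qed.
End Cyclic.

Section SocleDecomposition.
Variables (R : nzRingType) (S : lmodType R -> Prop).
Hypothesis Ssimple : forall X, S X -> simple_mod X.

Lemma FS_sub_Scompl (M X : lmodType R) (g : {linear X -> M}) :
  FS S M -> simple_mod X -> (forall x, g x = 0 -> x = 0) -> Scompl S X.
Proof.
move=> FSM hX g_inj; split=> // [[Y SY /mod_iso_sym [f [f' fK f'K]]]].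
have [x /eqP] := hX.1; apply; apply: g_inj.
by rewrite -[x]f'K -[g _]/((g \o f) (f' x)) (FSM Y (simple_XS SY (Ssimple SY))).
Qed.

Lemma in_add_coord (Y N : lmodType R) (P : N -> Prop) n (X : 'I_n -> lmodType R)
    (iota : forall i, {linear X i -> N}) (g : {linear Y -> N}) :
  (forall y, P y -> exists x : forall i, X i, y = \sum_i iota i (x i)) ->
  (forall x x' : forall i, X i,
     \sum_i iota i (x i) = \sum_i iota i (x' i) -> forall i, x i = x' i) ->
  (forall y, P (g y)) ->
  exists c : forall i, {linear Y -> X i}, forall y, g y = \sum_i iota i (c i y).
Proof.
move=> dec uniq Pg; have [coord coordP] := @ClassicalEpsilon.choice _ _
  (fun y (x : forall i, X i) => g y = \sum_i iota i (x i)) (fun y => dec _ (Pg y)).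
have coordD y1 y2 i : coord (y1 + y2) i = coord y1 i + coord y2 i.
  apply: (uniq _ (fun i => coord y1 i + coord y2 i)).
  by under [RHS]eq_bigr do rewrite linearD; rewrite big_split /= -!coordP linearD.
have coordZ r y i : coord (r *: y) i = r *: coord y i.
  apply: (uniq _ (fun i => r *: coord y i)).
  by under [RHS]eq_bigr do rewrite linearZ_LR; rewrite -scaler_sumr -!coordP linearZ_LR.
by exists (fun i => mkLin (fun y1 y2 => coordD y1 y2 i) (fun r y => coordZ r y i)).
Qed.

Lemma soc_in_add_FS (M : lmodType R) : soc_in_add (Scompl S) M -> FS S M.
Proof.
move=> [n [X [iota [SX _ dec uniq]]]].
apply/(FS_simpleP Ssimple) => Y SY g y0; apply/eqP; apply: NNPP => /negP gy0.
have socg y : soc (g y).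
  exists 1%N, (fun _ x => exists y, x = g y), (fun _ => g y); split; last by rewrite big_ord1.
    by move=> _; apply: simple_submod_image (Ssimple SY) _; exists y0.
  by move=> _; exists y.
have [c gc] := in_add_coord dec uniq socg.
have /sum_nonzero [i ci] : \sum_i iota i (c i y0) != 0 by rewrite -gc.
apply: (SX i).2; exists Y => //; apply: mod_iso_sym.
apply: (@simple_hom_iso _ _ _ (c i) (Ssimple SY) (SX i).1); exists y0.
by apply: contraNneq ci => ->; rewrite linear0.
Qed.

Hypothesis Rart : left_artinian R.

(* Each simple summand [U_i] of the socle is realized as [R / ann(u_i)]. *)
Lemma FS_soc_in_add (M : lmodType R) : fg M -> FS S M -> soc_in_add (Scompl S) M.
Proof.
move=> fgM FSM; have [n [Us [simpleU indepU coverU]]] := socle_finite Rart fgM.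
have [u Uu] : exists u : nat -> M, forall i, (i < n)%N -> Us i (u i) /\ u i != 0.
  apply: (@ClassicalEpsilon.choice _ _ (fun i x => (i < n)%N -> Us i x /\ x != 0)) => i.
  case: (ltnP i n) => [/simpleU [_ [x Ux x0] _]|le_ni]; first by exists x.
  by exists 0.
have UsE (i : 'I_n) x : Us i x <-> exists r : R, x = r *: u i.
  have [Uui ui0] := Uu i (ltn_ord i).
  exact: (simple_submod_cyclic (simpleU i (ltn_ord i)) Uui ui0).
pose g (i : 'I_n) := coimL (scale_map (u i)).
have g_inj i q : g i q = 0 -> q = 0 := @coimL_eq0 _ _ _ _ q.
have gE (i : 'I_n) r : g i (qpi _ r) = r *: u i := coimL_qpi _ r.
have Ug (i : 'I_n) q : Us i (g i q) by elim/qpi_ind: q => r; apply/UsE; exists r; rewrite gE.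
have img_simple (i : 'I_n) : simple_submod (fun y => exists q, y = g i q).
  apply: simple_submod_ext (simpleU i (ltn_ord i)) => y; split=> [/UsE [r ->]|[q ->]//].
  by exists (qpi _ (r : R^o)); rewrite gE.
exists n, (fun i => quot_of (submod_ker (scale_map (u i)))), g; split.
- move=> i; apply: (FS_sub_Scompl FSM _ (g_inj i)).
  exact: inj_image_simple (g_inj i) (img_simple i).
- move=> i q; exists 1%N, (fun _ => Us i), (fun _ => g i q).
  by split=> [_|_|]; [exact: simpleU | exact: Ug | rewrite big_ord1].
- move=> _ [m [V [x [simpleV Vx ->]]]].
  have span_sub : submod (fam_span Us n).
    by apply: submod_fam_span => i /simpleU [].
  have [z [Uz ->]] : fam_span Us n (\sum_(j < m) x j).
    by apply: (submod_sum _ span_sub) => j _; apply: coverU (simpleV j) _ (Vx j).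
  have [r hr] := @ClassicalEpsilon.choice _ _ (fun (i : 'I_n) (r : R) => z i = r *: u i)
    (fun i => iffLR (UsE i (z i)) (Uz i (ltn_ord i))).
  by exists (fun i => qpi _ (r i : R^o)); apply: eq_bigr => i _; rewrite gE hr.
- move=> x x' e i; pose w (j : nat) := if insub j is Some j' then g j' (x j' - x' j') else 0.
  have wE (j : 'I_n) : w j = g j (x j - x' j) by rewrite /w valK.
  have Uw j : (j < n)%N -> Us j (w j).
    by move=> lt_jn; rewrite -[j]/(val (Ordinal lt_jn)) wE; apply: Ug.
  have sum_w : \sum_(j < n) w j = 0.
    by under eq_bigr do rewrite wE linearB; rewrite sumrB e subrr.
  have := indepU w Uw sum_w i (ltn_ord i); rewrite wE => /g_inj /eqP.
  by rewrite subr_eq0 => /eqP.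
Qed.
End SocleDecomposition.

Lemma sum_split (V : zmodType) n1 n2 (G : 'I_n1 + 'I_n2 -> V) :
  \sum_(i < n1 + n2) G (split i) = \sum_(j < n1) G (inl j) + \sum_(j < n2) G (inr j).
Proof.
rewrite (reindex (@unsplit n1 n2)); last by exists split => x _; [exact: unsplitK | exact: splitK].
by under eq_bigr do rewrite unsplitK; rewrite big_sumType.
Qed.

Section TraceAndIdeal.
Variables (R : nzRingType) (S : lmodType R -> Prop).

Lemma submod_trace (M : lmodType R) : submod (trace S (M:=M)).
Proof.
split.
- by exists 0%N, (fun _ => M), (fun _ => idfun), (fun _ => 0); split; [case..|rewrite big_ord0].
- move=> _ _ [n1 [T1 [f1 [t1 [fg1 TS1 ->]]]]] [n2 [T2 [f2 [t2 [fg2 TS2 ->]]]]].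
  pose Ts w := match w with inl j => T1 j | inr j => T2 j end.
  pose fs w : {linear Ts w -> M} := match w with inl j => f1 j | inr j => f2 j end.
  pose ts w : Ts w := match w with inl j => t1 j | inr j => t2 j end.
  exists (n1 + n2)%N, (fun i => Ts (split i)), (fun i => fs (split i)), (fun i => ts (split i)).
  split=> [i|i|]; [by case: (split i) | by case: (split i) |].
  by rewrite (sum_split (fun w => fs w (ts w))).
- move=> r _ [n [T [f [t [fgT TST ->]]]]]; exists n, T, f, (fun i => r *: t i); split=> //.
  by rewrite scaler_sumr; apply: eq_bigr => i _; rewrite linearZ_LR.
Qed.

Lemma trace_image (M N : lmodType R) (g : {linear M -> N}) y : trace S y -> trace S (g y).
Proof.
move=> [n [T [f [t [fgT TST ->]]]]]; exists n, T, (fun i => g \o f i), t.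
by split=> //; rewrite linear_sum.
Qed.

Lemma submod_ideal_times (I : R -> Prop) (M : lmodType R) :
  (forall a x, I x -> I (a * x)) -> submod (ideal_times I (M:=M)).
Proof.
move=> I_left; split.
- by exists 0%N, (fun _ => 0), (fun _ => 0); split; [case | rewrite big_ord0].
- move=> _ _ [n1 [r1 [m1 [I1 ->]]]] [n2 [r2 [m2 [I2 ->]]]].
  pose rs w := match w with inl j => r1 j | inr j => r2 j end.
  pose ms w := match w with inl j => m1 j | inr j => m2 j end.
  exists (n1 + n2)%N, (fun i => rs (split i)), (fun i => ms (split i)).
  by split=> [i|]; [case: (split i) | rewrite (sum_split (fun w => rs w *: ms w))].
- move=> c _ [n [r [m [Ir ->]]]]; exists n, (fun i => c * r i), m.
  split=> [i|]; first exact: I_left.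
  by rewrite scaler_sumr; apply: eq_bigr => i _; rewrite scalerA.
Qed.

Lemma ideal_times_image (I : R -> Prop) (M N : lmodType R) (g : {linear M -> N}) y :
  ideal_times I y -> ideal_times I (g y).
Proof.
move=> [n [r [m [Ir ->]]]]; exists n, r, (fun i => g (m i)); split=> //.
by rewrite linear_sum; apply: eq_bigr => i _; rewrite linearZ_LR.
Qed.

Definition rmul_map (a : R) : {linear R^o -> R^o} :=
  mkLin (fun x y : R^o => mulrDl x y a) (fun (c : R) (x : R^o) => esym (mulrA c x a)).

Lemma IS_two_sided : two_sided_ideal (IS S).
Proof.
have tr := submod_trace R^o; split=> [||a x|a x]; first exact: submod0 tr.
- exact: (submodD tr).
- exact: (submodZ tr a).
- exact: (trace_image (rmul_map a)).
Qed.

Lemma ideal_times_trace (M : lmodType R) (y : M) : ideal_times (IS S) y -> trace S y.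
Proof.
move=> [n [r [m [ISr ->]]]]; apply: (submod_sum _ (submod_trace M)) => i _.
exact: (trace_image (scale_map (m i)) (ISr i)).
Qed.
End TraceAndIdeal.

(* In the application [L r] means [r s \in K], and [I] is a left ideal minimal
   among those not inside [L]; [C] is the cyclic module [R u]. *)
Section MinimalLeftIdeal.
Variables (R : nzRingType) (L I : R^o -> Prop) (u : R^o).
Hypotheses (hL : submod L) (hI : submod I) (Iu : I u) (nLu : ~ L u).
Hypothesis Imin : forall J, submod J -> (exists2 x, J x & ~ L x) ->
  (forall x, J x -> I x) -> forall x, I x -> J x.

Let C := quot_of (submod_ker (scale_map u)).

Lemma min_ideal_ker_sub (Y : lmodType R) (h : {linear C -> Y}) r :
  h (qpi _ 1) != 0 -> h (qpi _ r) = 0 -> L (r * u).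
Proof.
move=> h1_neq0 hr0; apply: NNPP => nLru.
pose J (x : R^o) := exists2 c, h (qpi _ c) = 0 & x = c * u.
have hJ : submod J.
  split; first by exists 0; [rewrite -qpiLE !linear0 | rewrite mul0r].
  - move=> _ _ [c hc ->] [c' hc' ->]; exists (c + c'); last by rewrite mulrDl.
    by rewrite qpiD linearD hc hc' addr0.
  - move=> a _ [c hc ->]; exists (a * c); last by rewrite -[a *: _]/(a * _) mulrA.
    by rewrite -[a * c]/(a *: c) qpiZ linearZ_LR hc scaler0.
have JI x : J x -> I x by move=> [c _ ->]; apply: (submodZ hI c Iu).
have [c hc0 ucu] := Imin hJ (ex_intro2 _ _ (r * u) (ex_intro2 _ _ r hr0 erefl) nLru) JI Iu.
move/negP: h1_neq0; apply; apply/eqP; rewrite -hc0; congr (h _).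
by apply/qpi_eqP => /=; rewrite -[_ *: u]/(_ * u) mulrBl mul1r -ucu subrr.
Qed.

Lemma min_ideal_hom_vanish (Y : lmodType R) (h : {linear C -> Y}) r :
  simple_mod Y -> h (qpi _ 1) != 0 -> L (r * u) -> h (qpi _ r) = 0.
Proof.
move=> hY h1_neq0 Lru; apply/eqP; apply: NNPP => /negP hr_neq0.
have [c hc] := simple_cyclic hY hr_neq0 (h (qpi _ 1)).
have h0 : h (qpi _ (1 - c * r : R^o)) = 0.
  by rewrite qpiB linearB -[c * r]/(c *: r) qpiZ linearZ_LR -hc subrr.
have := submodD hL (min_ideal_ker_sub h1_neq0 h0) (submodZ hL c Lru).
by rewrite -[c *: (r * u)]/(c * (r * u)) mulrA -mulrDl subrK mul1r.
Qed.
End MinimalLeftIdeal.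

Section TorsionGeneratedByIdeal.
Variables (R : nzRingType) (S : lmodType R -> Prop).
Hypothesis Ssimple : forall X, S X -> simple_mod X.
Hypothesis Rart : left_artinian R.

(* A nonzero map from [R u] to a module [Y] of [S] would induce the nonzero
   map [T -> T/K = R u s -> Y]. *)
Lemma TS_ideal_times (T : lmodType R) : fg T -> TS S T -> forall t : T, ideal_times (IS S) t.
Proof.
move=> fgT TST t; apply: NNPP => nt.
have [_ _ IS_left _] := IS_two_sided S.
have [K [maxK ITK]] := fg_exists_maximal fgT (submod_ideal_times T IS_left) (ex_intro _ t nt).
have [hK [s nKs] _] := maxK.
pose L (r : R^o) := K (r *: s).
have hL : submod L := submod_preim (scale_map s) hK.
pose P (J : R^o -> Prop) := submod J /\ exists2 x, J x & ~ L x.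
have PT : P (fun _ => True) by split=> //; exists 1 => //; rewrite /L scale1r.
have [I [[hI [u Iu nLu]] Imin]] :=
  dcc_minimal (Rart : dcc R^o) (fun J (PJ : P J) => PJ.1) (ex_intro _ _ PT).
have {}Imin J : submod J -> (exists2 x, J x & ~ L x) -> (forall x, J x -> I x) ->
    forall x, I x -> J x.
  by move=> hJ LJ; apply: Imin.
have TSC : TS S (quot_of (submod_ker (scale_map u))).
  apply/(TS_simpleP Ssimple) => Y SY h.
  have qpi1 (r : R^o) : qpi _ r = (r : R) *: qpi (submod_ker (scale_map u)) 1.
    by rewrite -qpiZ [_ *: _]mulr1.
  case: (eqVneq (h (qpi _ 1)) 0) => [h1_0|h1_neq0].
    by elim/qpi_ind => r; rewrite qpi1 linearZ_LR h1_0 scaler0.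
  pose f := scale_map (u *: s).
  have cover x : exists r, K (x - f r).
    have nKf1 : exists w, (exists r, w = f r) /\ ~ K w.
      by exists (f 1); split; [exists 1 | rewrite scale_mapE scale1r].
    by have [_ [[r ->] Kxfr]] := maximal_cover maxK (submod_image f) nKf1 x; exists r.
  have vanish r : K (f r) -> (h \o qpiL _) r = 0.
    rewrite scale_mapE scalerA => Lru.
    exact: (min_ideal_hom_vanish hL hI Iu nLu Imin (Ssimple SY) h1_neq0 Lru).
  have [h' h'f] := hom_factor hK cover vanish.
  have := h'f 1; rewrite (TST Y (simple_XS SY (Ssimple SY)) h') => /esym /= h1_0.
  by rewrite h1_0 eqxx in h1_neq0.
have ISu : IS S u.
  exists 1%N, (fun _ => quot_of (submod_ker (scale_map u))), (fun _ => coimL (scale_map u)).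
  exists (fun _ => qpi _ 1); split=> // [_|]; first exact: fg_quot_regular.
  by rewrite big_ord1 coimL_qpi scale_mapE scale1r.
by apply: nLu; apply: ITK; exists 1%N, (fun _ => u), (fun _ => s); rewrite big_ord1.
Qed.

Lemma trace_ideal_times (M : lmodType R) (y : M) : trace S y -> ideal_times (IS S) y.
Proof.
move=> [n [T [f [t [fgT TST ->]]]]]; have [_ _ IS_left _] := IS_two_sided S.
apply: (submod_sum _ (submod_ideal_times M IS_left)) => i _.
exact: ideal_times_image (TS_ideal_times (fgT i) (TST i) (t i)).
Qed.
End TorsionGeneratedByIdeal.

Theorem proposition3p9 (R : nzRingType) (S : lmodType R -> Prop) :
  left_artinian R ->
  (forall X, S X -> simple_mod X) ->
  [/\ (* (a) *)
      (forall M : lmodType R, fg M -> (TS S M <-> top_in_add (Scompl S) M)),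
      (* (b) *)
      (forall M : lmodType R, fg M -> (FS S M <-> soc_in_add (Scompl S) M)),
      (* (c) *)
      (forall (M P : lmodType R) (pi : {linear P -> M}),
          fg M -> TS S M -> projective_cover pi -> TS S P) &
      (* (d) *)
      (two_sided_ideal (IS S) /\
       forall M : lmodType R, fg M ->
         forall y : M, trace S y <-> ideal_times (IS S) y)].
Proof.
move=> Rart Ssimple; split.
- move=> M fgM; split; [exact: TS_top_in_add | exact: top_in_add_TS].
- move=> M fgM; split; [exact: FS_soc_in_add | exact: soc_in_add_FS].
- by move=> M P pi _; apply: projective_cover_TS.
- split=> [|M _ y]; first exact: IS_two_sided.
  by split; [exact: trace_ideal_times | exact: ideal_times_trace].
Qed.
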